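(* Consider BSPR networks with $K$ relays, $K=1,2,\dots$. Suppose that for each $K$ there exists $\mathcal M\subseteq\{1,\dots,K\}$ such that $|\mathcal M|\,(0.5-p_{\textnormal{MAX}(\mathcal M)})^2\to\infty$ as $K\to\infty$, where $p_{\textnormal{MAX}(\mathcal M)}=\max_{m\in\mathcal M}p_m$ and $p_i=p_{s,i}(1-p_{i,d})+(1-p_{s,i})p_{i,d}$. Then for any $\epsilon>0$ and any rate $R<1$, uncoded transmission with forwarding relays achieves average error probability $P_e\le\epsilon$ for sufficiently large $n$ and $K$.
   Context: BSPR network with $K$ relays: at each network use $t$ the source sends $U[t]\in\{0,1\}$; relay $i$ receives $V_i[t]=U[t]\oplus Z_i[t]$, $\Pr\{Z_i=1\}=p_{s,i}\in[0,1/2]$; relay $i$ sends $X_i[t]$ and the destination receives $Y_i[t]=X_i[t]\oplus E_i[t]$, $\Pr\{E_i=1\}=p_{i,d}\in[0,1/2]$; all noises mutually independent and i.i.d. over time. Uncoded transmission with forwarding relays: the message is $W=(W_1,\dots,W_n)$ with i.i.d. uniform bits; the source sends $U[t]=W_t$; each relay forwards, $X_i[t+1]=V_i[t]$ ($X_i[1]=0$); $n$ bits are sent in $n+1$ network uses (rate $n/(n+1)$), and the destination estimates each bit $W_t$ from its received symbols $(Y_1[t+1],\dots,Y_K[t+1])$ using a suitable decoding rule. $P_e$ is the probability of erroneous decoding at the destination. *)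

From HB Require Import structures.
From mathcomp Require Import all_boot all_order all_algebra.
Set Implicit Arguments. Unset Strict Implicit. Unset Printing Implicit Defensive.
Import Order.TTheory GRing.Theory Num.Theory.
Local Open Scope ring_scope.

Definition bern (R : realFieldType) (p : R) (b : bool) : R := if b then p else 1 - p.

(* Network uses are indexed 0..n (i.e. uses 1..n+1 in the paper's numbering).
   Source symbol: U[t] = W_t for the first n uses; in the last use the source
   sends 0 (irrelevant). *)
Definition src_symbol (n : nat) (w : {ffun 'I_n -> bool}) (tau : 'I_n.+1) : bool :=
  if insub (val tau) is Some t then w t else false.

Definition relay_rx (K n : nat) (w : {ffun 'I_n -> bool})
  (z : {ffun 'I_K * 'I_n.+1 -> bool}) (i : 'I_K) (tau : 'I_n.+1) : bool :=
  src_symbol w tau (+) z (i, tau).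

Definition relay_tx (K n : nat) (w : {ffun 'I_n -> bool})
  (z : {ffun 'I_K * 'I_n.+1 -> bool}) (i : 'I_K) (tau : 'I_n.+1) : bool :=
  if val tau == 0%N then false else relay_rx w z i (inord (val tau).-1).

Definition dest_rx (K n : nat) (w : {ffun 'I_n -> bool})
  (z e : {ffun 'I_K * 'I_n.+1 -> bool}) (i : 'I_K) (tau : 'I_n.+1) : bool :=
  relay_tx w z i tau (+) e (i, tau).

Definition received_for_bit (K n : nat) (w : {ffun 'I_n -> bool})
  (z e : {ffun 'I_K * 'I_n.+1 -> bool}) (t : 'I_n) : {ffun 'I_K -> bool} :=
  [ffun i => dest_rx w z e i (lift ord0 t)].

(* Probability of erroneous decoding (Ŵ <> W) with the per-bit decoding rule
   dec, W uniform on {0,1}^n, Z_i[tau] ~ Bern(p_{s,i}), E_i[tau] ~ Bern(p_{i,d}),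
   all independent. *)
Definition block_error_prob (R : realFieldType) (K n : nat) (ps pd : 'I_K -> R)
  (dec : 'I_n -> {ffun 'I_K -> bool} -> bool) : R :=
  \sum_(w : {ffun 'I_n -> bool})
  \sum_(z : {ffun 'I_K * 'I_n.+1 -> bool})
  \sum_(e : {ffun 'I_K * 'I_n.+1 -> bool})
    ((2%:R ^+ n)^-1
     * (\prod_(k : 'I_K * 'I_n.+1) bern (ps k.1) (z k))
     * (\prod_(k : 'I_K * 'I_n.+1) bern (pd k.1) (e k))
     * (if [exists t : 'I_n, dec t (received_for_bit w z e t) != w t]
        then 1 else 0)).

Definition eff_cross (R : realFieldType) (K : nat) (ps pd : 'I_K -> R) (i : 'I_K) : R :=
  ps i * (1 - pd i) + (1 - ps i) * pd i.

(* p_MAX(M) = max_{m in M} p_m  (0 for empty M, irrelevant since then |M| = 0) *)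
Definition pmax (R : realFieldType) (K : nat) (p : 'I_K -> R) (M : {set 'I_K}) : R :=
  \big[Num.max/0]_(m in M) p m.

(* Decode W_t by a majority vote over the relays in M and put d = 1/2 - p_MAX(M).
   The vote of relay i for W_t is flipped by Z_i ⊕ E_i, a Bernoulli(p_i) bit
   with p_i <= 1/2 - d.  The vote errs only if at least half of the votes are
   flipped, and then the Chernoff weight prod_i (1 + 2d)^(±1) is at least 1;
   its expectation factorises into terms p_i (1 + 2d) + (1 - p_i) / (1 + 2d),
   each at most 1 - 2d^2.  A union bound over the n bits and Bernoulli's
   inequality give P_e <= n / (1 + 2 |M| d^2), small once |M| d^2 >> n. *)
From HB Require Import structures.
From mathcomp Require Import all_boot all_order all_algebra.
From mathcomp Require Import ring lra.
Import Order.TTheory GRing.Theory Num.Theory.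
Local Open Scope ring_scope.
Set Implicit Arguments. Unset Strict Implicit.

Section ProductExpectation.
Variable R : realFieldType.

Lemma sum_ffun_prod_bern (I : finType) (q : I -> R) (h : I -> bool -> R) :
  \sum_(f : {ffun I -> bool}) (\prod_k bern (q k) (f k)) * \prod_k h k (f k)
  = \prod_k (q k * h k true + (1 - q k) * h k false).
Proof.
transitivity (\prod_k \sum_(b : bool) bern (q k) b * h k b).
  by rewrite bigA_distr_bigA; apply: eq_bigr => f _; rewrite big_split.
by apply: eq_bigr => k _; rewrite big_bool.
Qed.

Lemma prod_column (K N : nat) (H : 'I_K * 'I_N -> R) (M : {set 'I_K}) (j0 : 'I_N) :
  \prod_(k : 'I_K * 'I_N) (if (k.2 == j0) && (k.1 \in M) then H k else 1)
  = \prod_(i in M) H (i, j0).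
Proof.
rewrite (eq_bigr (fun k => if (k.2 == j0) && (k.1 \in M) then H (k.1, k.2) else 1));
  last by case.
rewrite -(pair_bigA _ (fun i j => if (j == j0) && (i \in M) then H (i, j) else 1)) /=.
rewrite [RHS]big_mkcond; apply: eq_bigr => i _.
by rewrite (bigD1 j0) //= eqxx big1 ?mulr1 // => j /negbTE ->.
Qed.

Lemma sum_ffun_prod_bern_column (K N : nat) (q : 'I_K -> R) (M : {set 'I_K})
    (j0 : 'I_N) (F : 'I_K -> bool -> R) :
  \sum_(f : {ffun 'I_K * 'I_N -> bool})
    (\prod_k bern (q k.1) (f k)) * \prod_(i in M) F i (f (i, j0))
  = \prod_(i in M) (q i * F i true + (1 - q i) * F i false).
Proof.
pose h (k : 'I_K * 'I_N) b := if (k.2 == j0) && (k.1 \in M) then F k.1 b else 1.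
transitivity (\sum_(f : {ffun 'I_K * 'I_N -> bool})
                (\prod_k bern (q k.1) (f k)) * \prod_k h k (f k)).
  by apply: eq_bigr => f _; rewrite -(prod_column (fun k => F k.1 (f k)) M j0).
rewrite (sum_ffun_prod_bern (fun k => q k.1) h).
rewrite -(prod_column (fun k => q k.1 * F k.1 true + (1 - q k.1) * F k.1 false) M j0).
by apply: eq_bigr => k _; rewrite /h; case: ifP => // _; rewrite !mulr1 addrC subrK.
Qed.

End ProductExpectation.

Section Inequalities.
Variable R : realFieldType.

Lemma bern_ge0 (p : R) b : 0 <= p <= 1 -> 0 <= bern p b.
Proof. by case: b => /andP[? ?] /=; lra. Qed.

Lemma exprB_mul_bernoulli_le1 (m : nat) (y : R) : 0 <= y <= 1 ->
  (1 - y) ^+ m * (1 + m%:R * y) <= 1.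
Proof.
move=> /andP[y0 y1]; elim: m => [|m IH]; first by rewrite expr0 mul0r addr0 mulr1.
rewrite exprS [(1 - y) * _]mulrC -mulrA; apply: le_trans IH; apply: ler_wpM2l.
  by apply: exprn_ge0; lra.
by rewrite -natr1; have : 0 <= m%:R :> R by []; nra.
Qed.

Lemma prod_pow_inv_ge1 (I : finType) (A : {set I}) (X : pred I) (l : R) :
  1 <= l -> (#|[set i in A | ~~ X i]| <= #|[set i in A | X i]|)%N ->
  1 <= \prod_(i in A) (if X i then l else l^-1).
Proof.
move=> l1 hc; rewrite (bigID X) /=.
rewrite (eq_bigr (fun _ => l)); last by move=> i /andP[_ ->].
rewrite [X in _ * X](eq_bigr (fun _ => l^-1)); last by move=> i /andP[_ /negbTE ->].
rewrite (eq_bigl [in [set i in A | X i]]); last by move=> i; rewrite inE.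
rewrite [X in _ * X](eq_bigl [in [set i in A | ~~ X i]]); last by move=> i; rewrite inE.
rewrite !prodr_const -(subnK hc) exprD exprVn -mulrA mulfV ?mulr1 ?exprn_ege1 //.
by rewrite expf_neq0 // gt_eqF // (lt_le_trans ltr01 l1).
Qed.

(* With l = 1 + 2d one has (1/2 + d) / l = 1/2, so the left side increases with
   p and equals 1 - 2d^2 at p = 1/2 - d. *)
Lemma chernoff_factor_le (p d : R) : 0 <= p -> 0 <= d -> p <= 1/2 - d ->
  p * (1 + 2 * d) + (1 - p) * (1 + 2 * d)^-1 <= 1 - 2 * d ^+ 2.
Proof.
move=> p0 d0 pd; set l := 1 + 2 * d; have l0 : 0 < l by rewrite /l; lra.
have hu2 : (1/2 + d) * l^-1 = 1/2 by rewrite /l; field; rewrite gt_eqF //; lra.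
have : (p - (1/2 - d)) * (l - l^-1) <= 0 by apply: mulr_le0_ge0; rewrite /l; nra.
by rewrite /l in hu2 *; nra.
Qed.

End Inequalities.

Section MaxCrossover.
Variables (R : realFieldType) (K : nat).

Lemma pmax_ge (p : 'I_K -> R) (M : {set 'I_K}) i : i \in M -> p i <= pmax p M.
Proof. by move=> iM; rewrite /pmax (bigD1 i) //= le_max lexx. Qed.

Lemma pmax_ge0 (p : 'I_K -> R) (M : {set 'I_K}) : 0 <= pmax p M.
Proof. by rewrite /pmax; elim/big_rec: _ => //= i x _ hx; rewrite le_max hx orbT. Qed.

Lemma pmax_le (p : 'I_K -> R) (M : {set 'I_K}) c :
  0 <= c -> (forall i, p i <= c) -> pmax p M <= c.
Proof. by move=> c0 hp; rewrite /pmax; elim/big_ind: _ => //= x y hx hy; rewrite ge_max hx. Qed.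

Variables (ps pd : 'I_K -> R).
Hypotheses (hps : forall i, 0 <= ps i <= 1/2) (hpd : forall i, 0 <= pd i <= 1/2).

Lemma eff_cross_bounds i : 0 <= eff_cross ps pd i <= 1/2.
Proof.
have /andP[? ?] := hps i; have /andP[? ?] := hpd i.
by rewrite /eff_cross; apply/andP; split; nra.
Qed.

Lemma gap_bounds (M : {set 'I_K}) : 0 <= 1/2 - pmax (eff_cross ps pd) M <= 1/2.
Proof.
have := pmax_ge0 (eff_cross ps pd) M; rewrite subr_ge0 => ?.
apply/andP; split; last lra.
by apply: pmax_le => [|i]; [lra | case/andP: (eff_cross_bounds i)].
Qed.

(* R need not be Archimedean: this bound is what lets the growth hypothesis of
   the corollary produce integers above any given element of R. *)
Lemma card_mul_gap2_le (M : {set 'I_K}) :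
  #|M|%:R * (1/2 - pmax (eff_cross ps pd) M) ^+ 2 <= K%:R.
Proof.
have /andP[d0 d1] := gap_bounds M; set d := _ - _ in d0 d1 *.
have hM : #|M|%:R <= K%:R :> R by rewrite ler_nat -[K in (_ <= K)%N]card_ord max_card.
have hd2 : d ^+ 2 <= 1 by rewrite expr2; nra.
have : 0 <= #|M|%:R :> R by [].
nra.
Qed.

End MaxCrossover.

Section MajorityDecoding.
Variables (R : realFieldType) (K n : nat).
Implicit Types (w : {ffun 'I_n -> bool}) (z e : {ffun 'I_K * 'I_n.+1 -> bool}).

(* The flip suffered by bit t on its way through relay i: the source noise of
   use t and the relay noise of use t + 1. *)
Definition bit_noise z e (i : 'I_K) (t : 'I_n) : bool :=
  z (i, inord t) (+) e (i, lift ord0 t).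

Definition majority_dec (M : {set 'I_K}) (t : 'I_n) (y : {ffun 'I_K -> bool}) : bool :=
  (#|[set i in M | ~~ y i]| < #|[set i in M | y i]|)%N.

Lemma received_for_bitE w z e t i :
  received_for_bit w z e t i = w t (+) bit_noise z e i t.
Proof.
rewrite ffunE /dest_rx /relay_tx /relay_rx /src_symbol /bit_noise /= add0n.
have -> : val (inord t : 'I_n.+1) = val t by rewrite /= inordK // leqW.
by rewrite valK addbA.
Qed.

Lemma majority_dec_errP (M : {set 'I_K}) w z e t :
  majority_dec M t (received_for_bit w z e t) != w t ->
  (#|[set i in M | ~~ bit_noise z e i t]| <= #|[set i in M | bit_noise z e i t]|)%N.
Proof.
have recv (P : bool -> bool) : [set i in M | P (received_for_bit w z e t i)]
    = [set i in M | P (w t (+) bit_noise z e i t)].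
  by apply/setP => i; rewrite !inE received_for_bitE.
rewrite /majority_dec (recv negb) (recv id).
case: (w t) => /=; first by under eq_finset do rewrite negbK; case: ltnP.
by case: ltnP => // h _; apply: ltnW.
Qed.

Variables (ps pd : 'I_K -> R).

Definition noise_prob (p : 'I_K -> R) z : R := \prod_(k : 'I_K * 'I_n.+1) bern (p k.1) (z k).

Definition chernoff_weight (M : {set 'I_K}) (l : R) z e (t : 'I_n) : R :=
  \prod_(i in M) (if bit_noise z e i t then l else l^-1).

Lemma noise_prob_ge0 (p : 'I_K -> R) z : (forall i, 0 <= p i <= 1) -> 0 <= noise_prob p z.
Proof. by move=> hp; apply: prodr_ge0 => k _; apply: bern_ge0. Qed.

Lemma chernoff_weight_expectation (M : {set 'I_K}) (l : R) t :
  \sum_z \sum_e noise_prob ps z * (noise_prob pd e * chernoff_weight M l z e t)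
  = \prod_(i in M) (eff_cross ps pd i * l + (1 - eff_cross ps pd i) * l^-1).
Proof.
under [LHS]eq_bigr => z _ do rewrite -mulr_sumr (sum_ffun_prod_bern_column pd M (lift ord0 t)
       (fun i b => if z (i, inord t) (+) b then l else l^-1)).
rewrite (sum_ffun_prod_bern_column ps M (inord t) (fun i a =>
      pd i * (if a (+) true then l else l^-1) + (1 - pd i) * (if a (+) false then l else l^-1))).
by apply: eq_bigr => i _ /=; rewrite /eff_cross; ring.
Qed.

Hypotheses (hps : forall i, 0 <= ps i <= 1) (hpd : forall i, 0 <= pd i <= 1).

(* Union bound over the bits; the Chernoff weights do not depend on the
   message, so the average over w disappears. *)
Lemma block_error_prob_majority_le (M : {set 'I_K}) (l : R) : 1 <= l ->
  block_error_prob ps pd (majority_dec M)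
  <= \sum_(t < n) \sum_z \sum_e
       noise_prob ps z * (noise_prob pd e * chernoff_weight M l z e t).
Proof.
move=> l1; have w0 : 0 <= (2%:R ^+ n)^-1 :> R by rewrite invr_ge0 exprn_ge0.
have G0 z e t : 0 <= chernoff_weight M l z e t.
  by apply: prodr_ge0 => i _; case: ifP => _; rewrite ?invr_ge0; lra.
apply: (@le_trans _ _ (\sum_(w : {ffun 'I_n -> bool}) \sum_z \sum_e (2%:R ^+ n)^-1 *
   \sum_(t < n) noise_prob ps z * (noise_prob pd e * chernoff_weight M l z e t))).
  apply: ler_sum => w _; apply: ler_sum => z _; apply: ler_sum => e _.
  rewrite -!mulr_sumr !mulrA.
  apply: ler_wpM2l; first by rewrite !mulr_ge0 // noise_prob_ge0.
  case: ifP => [/existsP [t ht]|_]; last by apply: sumr_ge0.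
  rewrite (bigD1 t) //=; apply: le_trans (prod_pow_inv_ge1 l1 (majority_dec_errP ht)) _.
  by rewrite lerDl; apply: sumr_ge0.
under eq_bigr => w _ do under eq_bigr => z _ do rewrite -mulr_sumr.
under eq_bigr => w _ do rewrite -mulr_sumr.
rewrite sumr_const card_ffun card_bool card_ord -mulrnAl -mulr_natr natrX mulVf ?mul1r;
  last by rewrite expf_neq0 // pnatr_eq0.
under eq_bigr => z _ do rewrite exchange_big.
by rewrite exchange_big.
Qed.

End MajorityDecoding.

Lemma majority_error_le (R : realFieldType) K n (ps pd : 'I_K -> R) (M : {set 'I_K}) :
  (forall i, 0 <= ps i <= 1/2) -> (forall i, 0 <= pd i <= 1/2) ->
  block_error_prob ps pd (@majority_dec K n M)
  <= n%:R / (1 + 2 * (#|M|%:R * (1/2 - pmax (eff_cross ps pd) M) ^+ 2)).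
Proof.
move=> hps hpd; have /andP[d0 d1] := gap_bounds hps hpd M.
set d := _ - pmax _ _ in d0 d1 *; set l := 1 + 2 * d.
have hprob (p : 'I_K -> R) : (forall i, 0 <= p i <= 1/2) -> forall i, 0 <= p i <= 1.
  by move=> hp i; case/andP: (hp i) => *; apply/andP; split; lra.
have l1 : 1 <= l by rewrite /l; lra.
apply: le_trans (block_error_prob_majority_le n (hprob _ hps) (hprob _ hpd) M l1) _.
have hfactor : \prod_(i in M) (eff_cross ps pd i * l + (1 - eff_cross ps pd i) * l^-1)
               <= (1 - 2 * d ^+ 2) ^+ #|M|.
  rewrite -prodr_const; apply: ler_prod => i iM.
  have /andP[p0 p1] := eff_cross_bounds hps hpd i.
  have hpi := pmax_ge (eff_cross ps pd) iM.
  have u0 : 0 <= l^-1 by rewrite invr_ge0 /l; lra.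
  rewrite chernoff_factor_le ?andbT //; last by rewrite /d; lra.
  by rewrite addr_ge0 // mulr_ge0 //; rewrite /l; lra.
have hy : 0 <= 2 * d ^+ 2 <= 1 by rewrite expr2; apply/andP; split; nra.
have hbern := exprB_mul_bernoulli_le1 #|M| hy.
have q0 : 0 <= #|M|%:R * d ^+ 2 by rewrite mulr_ge0 // sqr_ge0.
under eq_bigr => t _ do rewrite chernoff_weight_expectation.
rewrite sumr_const card_ord -[X in X <= _]mulr_natl ler_pdivlMr; last lra.
have -> : 2 * (#|M|%:R * d ^+ 2) = #|M|%:R * (2 * d ^+ 2) by ring.
rewrite -mulrA; apply: ler_piMr => //; apply: le_trans (ler_wpM2r _ hfactor) _; first lra.
exact: hbern.
Qed.

Lemma rate_ge (R : realFieldType) (Rt : R) N n :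
  Rt < 1 -> (1 - Rt)^-1 < N%:R -> (N <= n)%N -> Rt <= n%:R / n.+1%:R.
Proof.
move=> Rt1 hN hn; have hnN : N%:R <= n%:R :> R by rewrite ler_nat.
have h1 : 1 < n%:R * (1 - Rt).
  by rewrite -ltr_pdivrMr ?subr_gt0 // div1r; apply: lt_le_trans hN hnN.
by rewrite ler_pdivlMr ?ltr0Sn // -natr1; nra.
Qed.

Unset Implicit Arguments.

Theorem corollary3 (R : realFieldType)
  (ps pd : forall K : nat, 'I_K -> R) (M : forall K : nat, {set 'I_K}) :
  (forall K (i : 'I_K), 0 <= ps K i <= 1/2) ->
  (forall K (i : 'I_K), 0 <= pd K i <= 1/2) ->
  (forall B : R, exists K0 : nat, forall K : nat, (K0 <= K)%N ->
     B < #|M K|%:R * (1/2 - pmax (eff_cross (ps K) (pd K)) (M K)) ^+ 2) ->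
  forall eps : R, 0 < eps -> forall Rt : R, Rt < 1 ->
  exists N : nat, forall n : nat, (N <= n)%N ->
    Rt <= n%:R / n.+1%:R /\
    exists K0 : nat, forall K : nat, (K0 <= K)%N ->
      exists dec : 'I_n -> {ffun 'I_K -> bool} -> bool,
        block_error_prob (ps K) (pd K) dec <= eps.
Proof.
move=> hps hpd hM eps eps0 Rt Rt1.
have [N hN] : exists N : nat, (1 - Rt)^-1 < N%:R.
  have [K0 hK] := hM (1 - Rt)^-1; exists K0.
  exact: lt_le_trans (hK K0 (leqnn _)) (card_mul_gap2_le (hps K0) (hpd K0) (M K0)).
exists N => n hn; split; first exact: rate_ge Rt1 hN hn.
have [K0 hK] := hM (n%:R / eps); exists K0 => K hK0; exists (majority_dec (M K)).
apply: le_trans (majority_error_le n (M K) (hps K) (hpd K)) _.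
have := hK K hK0; rewrite ltr_pdivrMr //.
set q := _ * _ ^+ 2 => hq.
have q0 : 0 <= q by apply: mulr_ge0 => //; apply: sqr_ge0.
rewrite ler_pdivrMr; last lra.
have : 0 <= eps * q by rewrite mulr_ge0 // ltW.
nra.
Qed.
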